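(* The family of decidable safety constraints is a family with a universal detector, i.e. there is a detector $u$ such that $\{C_u(x):x\in|u|\}$ is exactly the set of decidable safety constraints.
   Context: Fix a finite nonempty set $N$; $N^+$ the nonempty finite words, $N^{\mathbb N}$ the streams; $s[m{:}]$ the suffix; $n^{-1}\cdot A=\{u:nu\in A\}$; a set of words is prefix-free if no proper prefix (including the empty word) of a member is a member. Let $\mathbf 1=\{\Downarrow\}$. A detector is a set $|a|$ with $a:|a|\to(\mathbf 1+|a|)^N$. The final detector $\omega$ has carrier $\Omega$ = the set of prefix-free subsets of $N^+$, with $\omega(P)(n)=\Downarrow$ if $n\in P$, else $n^{-1}\cdot P$. For $s\in N^{\mathbb N}$, $\mathrm{Join}([s],a)$ maps $(t,y)\in\{s[k{:}]\}\times|a|$ to $\Downarrow$ if $a(y)(t(0))=\Downarrow$, else $(t[1{:}],a(y)(t(0)))$; iterates $g^{(1)}=g$, $g^{(k+1)}(z)=\Downarrow$ if $g^{(k)}(z)=\Downarrow$, else $g(g^{(k)}(z))$. $C_a(x)=\{s:\mathrm{Join}([s],a)^{(k)}(s,x)\ne\Downarrow\ \forall k\ge1\}$. A safety constraint $S$ is decidable if $S=C_\omega(P)$ for some $P\in\Omega$ that is a decidable (recursive) set of words. A family $\mathcal F$ of safety constraints is a family with a universal detector if $\mathcal F=\{C_a(x):x\in|a|\}$ for some detector $a$. *)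

From Stdlib Require Cantor.
From mathcomp Require Import all_boot.
Set Implicit Arguments. Unset Strict Implicit. Unset Printing Implicit Defensive.

(* Computability: partial recursive functions nat -> nat, built from    *)
(* zero, successor, Cantor unpairing projections, pairing, composition, *)
(* primitive recursion and unbounded minimisation (a standard complete  *)
(* basis for the partial recursive functions, tuples coded by Cantor).  *)
Inductive prf : Type :=
| PZero | PSucc | PFst | PSnd
| PPair of prf & prf
| PComp of prf & prf
| PRec  of prf & prf      (* <a,0> |-> f a ; <a,n+1> |-> g <a,<n,h(a,n)>> *)
| PMu   of prf.

Inductive peval : prf -> nat -> nat -> Prop :=
| ev_zero x : peval PZero x 0
| ev_succ x : peval PSucc x x.+1
| ev_fst x : peval PFst x (Cantor.of_nat x).1
| ev_snd x : peval PSnd x (Cantor.of_nat x).2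
| ev_pair f g x a b : peval f x a -> peval g x b ->
    peval (PPair f g) x (Cantor.to_nat (a, b))
| ev_comp f g x y z : peval g x y -> peval f y z -> peval (PComp f g) x z
| ev_rec f g x r : prec_eval f g (Cantor.of_nat x).1 (Cantor.of_nat x).2 r ->
    peval (PRec f g) x r
| ev_mu f x n : peval f (Cantor.to_nat (x, n)) 0 ->
    (forall m, m < n -> exists k, peval f (Cantor.to_nat (x, m)) k.+1) ->
    peval (PMu f) x n
with prec_eval : prf -> prf -> nat -> nat -> nat -> Prop :=
| pr_zero f g a r : peval f a r -> prec_eval f g a 0 r
| pr_succ f g a n r r' : prec_eval f g a n r ->
    peval g (Cantor.to_nat (a, Cantor.to_nat (n, r))) r' ->
    prec_eval f g a n.+1 r'.

Section Detectors.
Variable N : finType.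

Fixpoint word_code (w : seq N) : nat :=
  match w with
  | [::] => 0
  | n :: w' => (Cantor.to_nat (nat_of_ord (enum_rank n), word_code w')).+1
  end.

Definition recursive_set (P : seq N -> bool) : Prop :=
  exists c : prf, forall w, peval c (word_code w) (nat_of_bool (P w)).

Definition prefix_free_plus (P : seq N -> bool) : Prop :=
  P [::] = false /\
  forall w, P w -> forall k, k < size w -> P (take k w) = false.

Definition Omega := {P : seq N -> bool | prefix_free_plus P}.

Definition deriv (n : N) (P : seq N -> bool) : seq N -> bool :=
  fun u => P (n :: u).

Lemma deriv_pf (P : Omega) (n : N) :
  proj1_sig P [:: n] = false -> prefix_free_plus (deriv n (proj1_sig P)).
Proof.
case: P => P [P0 Ppf] /= Pn; split; first by [].
move=> w Pw k lt_k; rewrite /deriv.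
have := Ppf (n :: w) Pw k.+1 lt_k. by [].
Qed.

(* Detectors: a carrier with a : |a| -> (1 + |a|)^N ; None stands for ⇓. *)
Record detector : Type := Detector {
  carrier : Type;
  dstep : carrier -> N -> option carrier
}.

Definition omega_step (P : Omega) (n : N) : option Omega :=
  match boolP (proj1_sig P [:: n]) with
  | AltTrue _ => None
  | AltFalse h => Some (exist _ (deriv n (proj1_sig P)) (deriv_pf (negbTE h)))
  end.

Definition omega : detector := @Detector Omega omega_step.

Definition stream := nat -> N.

Definition join (a : detector) (z : stream * carrier a)
  : option (stream * carrier a) :=
  match dstep z.2 (z.1 0) with
  | None => None
  | Some y' => Some (fun m => z.1 m.+1, y')
  end.

Fixpoint join_iter (a : detector) (k : nat) (z : stream * carrier a)
  : option (stream * carrier a) :=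
  match k with
  | 0 => Some z  (* unused: only k >= 1 is ever considered *)
  | 1 => join z
  | k'.+1 => match join_iter k' z with
             | None => None
             | Some z' => join z'
             end
  end.

Definition C (a : detector) (x : carrier a) : stream -> Prop :=
  fun s => forall k, 1 <= k -> join_iter k (s, x) <> None.

Definition decidable_safety (S : stream -> Prop) : Prop :=
  exists P : Omega, recursive_set (proj1_sig P) /\
    forall s, S s <-> @C omega P s.

End Detectors.

(* The final detector maps each prefix-free set P to its derivatives n^-1.P,
   and derivatives of a recursive set are recursive. Hence the recursive
   states of omega form a subdetector u, and the inclusion of u into omega is
   a detector morphism; morphisms preserve the constraints C, so the
   constraints of u are exactly the decidable safety constraints. *)
From mathcomp Require Import all_boot.

Set Implicit Arguments.
Unset Strict Implicit.
Unset Printing Implicit Defensive.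

Fixpoint pconst (k : nat) : prf :=
  match k with 0 => PZero | k'.+1 => PComp PSucc (pconst k') end.

Lemma peval_const k x : peval (pconst k) x k.
Proof.
elim: k => [|k IHk] /=; first exact: ev_zero.
by apply: ev_comp; [exact: IHk | exact: ev_succ].
Qed.

Lemma peval_id x : peval (PPair PFst PSnd) x x.
Proof.
rewrite -[in X in peval _ _ X](Cantor.cancel_to_of x) [Cantor.of_nat x]surjective_pairing.
by apply: ev_pair; [exact: ev_fst | exact: ev_snd].
Qed.

Section Detectors.
Variable N : finType.

Lemma recursive_set_deriv (P : seq N -> bool) (n : N) :
  recursive_set P -> recursive_set (deriv n P).
Proof.
case=> c Pc.
exists (PComp c (PComp PSucc (PPair (pconst (enum_rank n)) (PPair PFst PSnd)))).
move=> w; apply: ev_comp _ (Pc (n :: w)).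
apply: ev_comp _ (ev_succ _).
by apply: ev_pair; [exact: peval_const | exact: peval_id].
Qed.

Definition detector_morphism (a b : detector N) (f : carrier a -> carrier b) :=
  forall x n, dstep (f x) n = omap f (dstep x n).

Lemma join_iterS (d : detector N) k (z : stream N * carrier d) :
  join_iter k.+1 z = obind (@join N d) (join_iter k z).
Proof. by case: k. Qed.

Section Morphism.
Variables (a b : detector N) (f : carrier a -> carrier b).
Hypothesis f_morph : detector_morphism f.

Let fz (z : stream N * carrier a) : stream N * carrier b := (z.1, f z.2).

Lemma join_morph z : join (fz z) = omap fz (join z).
Proof. by rewrite /join /= f_morph; case: dstep. Qed.

Lemma join_iter_morph k z : join_iter k (fz z) = omap fz (join_iter k z).
Proof.
elim: k => [|k IHk] //; rewrite !join_iterS IHk.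
by case: join_iter => //= z'; exact: join_morph.
Qed.

Lemma C_morph x s : C (f x) s <-> C x s.
Proof.
rewrite /C; split=> Cs k k_gt0; have := Cs k k_gt0;
  by rewrite (join_iter_morph k (s, x)); case: join_iter.
Qed.

End Morphism.

Definition recursive_state := {P : Omega N | recursive_set (sval P)}.

Definition recursive_step (x : recursive_state) (n : N) : option recursive_state :=
  match boolP (sval (sval x) [:: n]) with
  | AltTrue _ => None
  | AltFalse h => Some (exist _ (exist _ (deriv n (sval (sval x))) (deriv_pf (negbTE h)))
                         (recursive_set_deriv n (svalP x)))
  end.

Definition universal_detector : detector N := Detector recursive_step.

Lemma sval_detector_morphism :
  @detector_morphism universal_detector (omega N) sval.
Proof. by move=> x n; rewrite /= /recursive_step /omega_step; destruct boolP. Qed.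

End Detectors.

Theorem mainTheorem18 (N : finType) (n0 : N) :
  exists u : detector N,
    forall S : stream N -> Prop,
      (exists x : carrier u, forall s, S s <-> C x s) <-> decidable_safety S.
Proof.
exists (universal_detector N) => S; split.
- case=> x Sx; exists (sval x); split; first exact: (svalP x).
  by move=> s; rewrite Sx (C_morph (@sval_detector_morphism N)).
- case=> P [recP SP]; exists (exist _ P recP) => s.
  by rewrite SP -(C_morph (@sval_detector_morphism N)).
Qed.
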